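(* Let $n\ge 2$ and $c\ge1$ be integers, and let $e_{n,c}$ be the order of $b^{-n}a^{-n}(ab)^{n}$ in $M(R(2,n;c))$. If $G$ is any finite group of exponent $n$ that is nilpotent of class at most $c$, then the exponent of $M(G)$ divides $n\,e_{n,c}$.
   Context: $R(2,n)$ denotes the largest finite $2$-generator group of exponent $n$, and $R(2,n;c)$ denotes its largest quotient of nilpotency class at most $c$ (equivalently the largest $2$-generator group of exponent $n$ and class at most $c$). Write $R(2,n;c)=F/R$ with $F$ free on $a,b$. The Schur multiplier is given by Hopf's formula $M(G)=(R\cap F')/[F,R]$ for $G=F/R$, $F$ free; $b^{-n}a^{-n}(ab)^n[F,R]$ lies in $M(R(2,n;c))$. *)

(* Free groups are not in MathComp, so we model the free
   group on a type X by words over X, with equality in the free group given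
   by equality of free reductions. *)
From HB Require Import structures.
From mathcomp Require Import all_boot all_order all_fingroup all_solvable.
Set Implicit Arguments. Unset Strict Implicit. Unset Printing Implicit Defensive.

Section FreeGroup.
Variable X : eqType.

(* a letter (false, x) stands for x, (true, x) for x^-1 *)
Definition letter := (bool * X)%type.
Definition word := seq letter.

Definition wpush (a : letter) (w : word) : word :=
  match w with
  | b :: w' => if (b.1 != a.1) && (b.2 == a.2) then w' else a :: w
  | [::] => [:: a]
  end.

(* free reduction; u and v represent the same element of the free group
   iff fred u = fred v *)
Definition fred (w : word) : word := foldr wpush [::] w.

(* group operations on words: product is concatenation *)
Definition winv (w : word) : word := rev (map (fun a => (~~ a.1, a.2)) w).
Definition wexp (w : word) (m : nat) : word := flatten (nseq m w).
Definition wcomm (u v : word) : word := winv u ++ winv v ++ u ++ v.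

Inductive gen (S : word -> Prop) : word -> Prop :=
| gen_base w : S w -> gen S w
| gen_one : gen S [::]
| gen_inv w : gen S w -> gen S (winv w)
| gen_mul u v : gen S u -> gen S v -> gen S (u ++ v)
| gen_eq u v : fred u = fred v -> gen S u -> gen S v.

Definition commsub (A B : word -> Prop) : word -> Prop :=
  gen (fun w => exists u v, A u /\ B v /\ w = wcomm u v).

(* lower central series: lcs k = gamma_{k+1}(F) ; lcs 0 = F *)
Fixpoint lcs (k : nat) : word -> Prop :=
  match k with
  | 0 => fun _ => True
  | k'.+1 => commsub (lcs k') (fun _ => True)
  end.

Definition Fder : word -> Prop := commsub (fun _ => True) (fun _ => True).

Definition powsub (n : nat) : word -> Prop :=
  gen (fun w => exists u, w = wexp u n).

(* M = (R cap F')/[F,R]; the element x (of R cap F') has order dividing m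
   in M iff x^m lies in [F,R]; M has exponent dividing m iff this holds for
   every x in R cap F'. *)
Definition mult_exp_dvd (R : word -> Prop) (m : nat) : Prop :=
  forall x, R x -> Fder x -> commsub (fun _ => True) R (wexp x m).

Definition mult_order (R : word -> Prop) (x : word) (e : nat) : Prop :=
  0 < e /\ commsub (fun _ => True) R (wexp x e) /\
  forall k, 0 < k < e -> ~ commsub (fun _ => True) R (wexp x k).

End FreeGroup.

Definition gen_a : word bool := [:: (false, false)].
Definition gen_b : word bool := [:: (false, true)].

(* R = F^n gamma_{c+1}(F): the kernel of F_2 -> R(2,n;c) *)
Definition Rrel (n c : nat) : word bool -> Prop :=
  gen (fun w => powsub n w \/ lcs c w).

Definition wspecial (n : nat) : word bool :=
  wexp (winv gen_b) n ++ wexp (winv gen_a) n ++ wexp (gen_a ++ gen_b) n.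

Definition is_e (n c e : nat) : Prop := mult_order (Rrel n c) (wspecial n) e.

(* ---- presentation of a finite group G = F/R, F free on the elements of G ---- *)
Definition weval (gT : finGroupType) (w : word gT) : gT :=
  foldr (fun a g => ((if a.1 then a.2^-1 else a.2) * g)%g) 1%g w.

Definition Rker (gT : finGroupType) : word gT -> Prop :=
  fun w => weval w = 1%g.

Definition schur_exp_dvd (gT : finGroupType) (m : nat) : Prop :=
  mult_exp_dvd (@Rker gT) m.

From mathcomp Require Import all_boot all_order all_fingroup all_solvable.
Set Implicit Arguments. Unset Strict Implicit. Unset Printing Implicit Defensive.

(* Write G = F/R. Since G has exponent n and class <= c, every substitution
   a := x, b := y maps the relators of R(2,n;c) into R, hence maps the
   [F_2, R(2,n;c)]-part into [F,R]. So for X = x^n, Y = y^n and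
   W = Y^-1 X^-1 (xy)^n, all in R, we get W^e in [F,R]. Elements of R are
   central modulo [F,R], so there powering is multiplicative on R and
   (xy)^(ne) = (XYW)^e = X^e Y^e W^e = x^(ne) y^(ne). Hence the (ne)-th power
   of a commutator [u,v] is [u^(ne), v^(ne)] modulo [F,R], which lies in [F,R]
   because v^(ne) is in R; the (ne)-th power map being a homomorphism modulo
   [F,R], it sends all of F' into [F,R]. *)

Section FreeReduction.
Variable X : eqType.
Implicit Types (u v w r : word X) (a b : letter X).

Definition linv a : letter X := (~~ a.1, a.2).

Lemma linvK a : linv (linv a) = a.
Proof. by case: a => [s x]; rewrite /linv /= negbK. Qed.

Lemma wpush_cancel_linv a b : (b.1 != a.1) && (b.2 == a.2) -> b = linv a.
Proof. by case: a b => [s x] [t y] /andP [/= H1 /eqP ->]; case: s t H1 => [] []. Qed.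

Lemma winv_cat u v : winv (u ++ v) = winv v ++ winv u.
Proof. by rewrite /winv map_cat rev_cat. Qed.

Lemma winv_cons a u : winv (a :: u) = winv u ++ [:: linv a].
Proof. by rewrite /winv /= rev_cons cats1. Qed.

Lemma winvK u : winv (winv u) = u.
Proof.
elim: u => // a u IH; by rewrite winv_cons winv_cat IH /= /linv /= negbK; case: a.
Qed.

Lemma wexpS u m : wexp u m.+1 = u ++ wexp u m.
Proof. by []. Qed.

Lemma wexpD u m1 m2 : wexp u (m1 + m2) = wexp u m1 ++ wexp u m2.
Proof. by elim: m1 => // m1 IH; rewrite addSn !wexpS IH catA. Qed.

Lemma wexpSr u m : wexp u m.+1 = wexp u m ++ u.
Proof. by rewrite -addn1 wexpD /wexp /= cats0. Qed.

Lemma wexpM u m1 m2 : wexp u (m1 * m2) = wexp (wexp u m1) m2.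
Proof. by elim: m2 => [|m2 IH]; rewrite ?muln0 // mulnS wexpD IH. Qed.

Lemma wexp_nil m : wexp ([::] : word X) m = [::].
Proof. by elim: m. Qed.

Lemma winv_exp u m : winv (wexp u m) = wexp (winv u) m.
Proof. by elim: m => // m IH; rewrite wexpS winv_cat IH wexpSr. Qed.

Fixpoint reduced w : bool :=
  if w is a :: w' then
    (if w' is b :: _ then ~~ ((b.1 != a.1) && (b.2 == a.2)) else true) && reduced w'
  else true.

Lemma reduced_wpush a w : reduced w -> reduced (wpush a w).
Proof. by case: w => [|b w] //= /andP [H1 H2]; case: ifP => // H; rewrite /= H H1. Qed.

Lemma reduced_fred w : reduced (fred w).
Proof. by elim: w => //= a w; apply: reduced_wpush. Qed.

Lemma reduced_foldr_wpush w u : reduced w -> reduced (foldr (@wpush X) w u).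
Proof. by move=> Hw; elim: u => //= a u IH; apply: reduced_wpush. Qed.

Lemma wpush_linvK a r : reduced r -> wpush a (wpush (linv a) r) = r.
Proof.
case: a => [s x]; case: r => [|[t y] r] /=; first by rewrite eqxx; case: s.
case: (y =P x) => [->|neq]; last by move=> _; rewrite andbF /= eqxx; case: s.
case: s; case: t => /andP [H1 _]; rewrite /= ?eqxx //;
by case: r H1 => [|[t' y'] r] //= H1; rewrite (negbTE H1).
Qed.

Lemma wpushK a r : reduced r -> wpush (linv a) (wpush a r) = r.
Proof. by move=> Hr; rewrite -{2}(linvK a) wpush_linvK. Qed.

Lemma foldr_wpush_push w v a : reduced w ->
  foldr (@wpush X) w (wpush a v) = wpush a (foldr (@wpush X) w v).
Proof.
move=> Hw; case: v => [|b v] //=; case: ifP => // /wpush_cancel_linv ->.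
by rewrite wpush_linvK ?reduced_foldr_wpush.
Qed.

Lemma foldr_wpush_fred w u : reduced w ->
  foldr (@wpush X) w u = foldr (@wpush X) w (fred u).
Proof. by move=> Hw; elim: u => //= a u IH; rewrite IH foldr_wpush_push. Qed.

Lemma fred_cat u v : fred (u ++ v) = foldr (@wpush X) (fred v) u.
Proof. by rewrite /fred foldr_cat. Qed.

Lemma fred_cat_fred u v : fred (u ++ v) = foldr (@wpush X) (fred v) (fred u).
Proof.
by rewrite fred_cat -foldr_wpush_fred ?reduced_fred.
Qed.

Lemma fred_cat_congr u u' v v' : fred u = fred u' -> fred v = fred v' ->
  fred (u ++ v) = fred (u' ++ v').
Proof. by rewrite !(fred_cat_fred _ v) (fred_cat_fred _ v') => -> ->. Qed.

Lemma fred_exp_congr u v m : fred u = fred v -> fred (wexp u m) = fred (wexp v m).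
Proof. by move=> H; elim: m => // m IH; rewrite !wexpS; apply: fred_cat_congr. Qed.

Lemma fred_winvl u : fred (winv u ++ u) = [::].
Proof.
elim: u => // a u IH; rewrite winv_cons -catA fred_cat /=.
by rewrite wpushK -?fred_cat ?reduced_fred.
Qed.

Lemma fred_winvr u : fred (u ++ winv u) = [::].
Proof. by have := fred_winvl (winv u); rewrite winvK. Qed.

Lemma fred_cancelVw u w v : fred (u ++ winv w ++ w ++ v) = fred (u ++ v).
Proof. by rewrite (fred_cat u) (fred_cat u v) catA fred_cat_fred fred_winvl. Qed.

Lemma fred_cancelwV u w v : fred (u ++ w ++ winv w ++ v) = fred (u ++ v).
Proof. by rewrite (fred_cat u) (fred_cat u v) catA fred_cat_fred fred_winvr. Qed.

End FreeReduction.

Section Substitution.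
Variables (Y X : eqType) (f : Y -> word X).

Definition wsubst1 (a : letter Y) : word X := if a.1 then winv (f a.2) else f a.2.

Fixpoint wsubst (w : word Y) : word X :=
  if w is a :: w' then wsubst1 a ++ wsubst w' else [::].

Lemma wsubst_cat u v : wsubst (u ++ v) = wsubst u ++ wsubst v.
Proof. by elim: u => //= a u ->; rewrite catA. Qed.

Lemma wsubst1_linv a : wsubst1 (linv a) = winv (wsubst1 a).
Proof. by case: a => [[] y]; rewrite /wsubst1 /= ?winvK. Qed.

Lemma wsubst_inv u : wsubst (winv u) = winv (wsubst u).
Proof.
elim: u => // a u IH.
by rewrite winv_cons wsubst_cat IH /= cats0 wsubst1_linv winv_cat.
Qed.

Lemma wsubst_exp u m : wsubst (wexp u m) = wexp (wsubst u) m.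
Proof. by elim: m => // m IH; rewrite !wexpS wsubst_cat IH. Qed.

Lemma wsubst_wcomm u v : wsubst (wcomm u v) = wcomm (wsubst u) (wsubst v).
Proof. by rewrite /wcomm !wsubst_cat !wsubst_inv. Qed.

Lemma fred_wsubst_fred u : fred (wsubst (fred u)) = fred (wsubst u).
Proof.
elim: u => // a u IH; rewrite /= fred_cat_fred -IH -fred_cat_fred.
case: (fred u) => [|b w] //=; case: ifP => // /wpush_cancel_linv ->.
by rewrite wsubst1_linv (fred_cancelwV [::]).
Qed.

Lemma fred_wsubst_congr u v : fred u = fred v -> fred (wsubst u) = fred (wsubst v).
Proof. by move=> H; rewrite -fred_wsubst_fred H fred_wsubst_fred. Qed.

End Substitution.

Lemma wsubst_wspecial (X : eqType) (f : bool -> word X) n :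
  wsubst f (wspecial n) =
  winv (wexp (f true) n) ++ winv (wexp (f false) n) ++ wexp (f false ++ f true) n.
Proof. by rewrite /wspecial !wsubst_cat !wsubst_exp !wsubst_inv /= !cats0 !winv_exp. Qed.

Section Subgroups.
Variable X : eqType.
Implicit Types (P S : word X -> Prop).

Definition wsubgroup P :=
  [/\ P [::], forall w, P w -> P (winv w), forall u v, P u -> P v -> P (u ++ v)
    & forall u v, fred u = fred v -> P u -> P v].

Lemma gen_wsubgroup S : wsubgroup (gen S).
Proof. by split; [apply: gen_one | apply: gen_inv | apply: gen_mul | apply: gen_eq]. Qed.

Lemma gen_min S P : wsubgroup P -> (forall w, S w -> P w) -> forall w, gen S w -> P w.
Proof.
case=> P1 PV PM Pfred PS w; elim=> // [w' _|u v _ Pu _ Pv|u v H _]; auto.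
exact: Pfred.
Qed.

End Subgroups.

Lemma wsubgroup_wsubst (Y X : eqType) (f : Y -> word X) (P : word X -> Prop) :
  wsubgroup P -> wsubgroup (fun w => P (wsubst f w)).
Proof.
case=> P1 PV PM Pfred; split=> // [w'|u v|u v H].
- by rewrite wsubst_inv; apply: PV.
- by rewrite wsubst_cat; apply: PM.
- by apply: Pfred; apply: fred_wsubst_congr.
Qed.

Lemma commsub_wsubst (Y X : eqType) (f : Y -> word X) (R : word Y -> Prop)
    (R' : word X -> Prop) :
  (forall w, R w -> R' (wsubst f w)) ->
  forall w, commsub (fun _ => True) R w -> commsub (fun _ => True) R' (wsubst f w).
Proof.
move=> RR'; apply: gen_min; first exact/wsubgroup_wsubst/gen_wsubgroup.
move=> _ [u [v [_ [Rv ->]]]]; rewrite wsubst_wcomm.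
by apply: gen_base; exists (wsubst f u), (wsubst f v); split; last split; auto.
Qed.

Section CongruenceModFR.
Variables (X : eqType) (R : word X -> Prop).
Implicit Types (u v w x y z g r s : word X).
Local Notation FR := (commsub (fun _ => True) R).

Lemma commsub_conj g s : FR s -> FR (winv g ++ s ++ g).
Proof.
elim=> {s}.
- move=> _ [u [v [_ [Rv ->]]]].
  apply: (gen_eq (u := wcomm (u ++ g) v ++ winv (wcomm g v))); last first.
    apply: gen_mul; first by apply: gen_base; exists (u ++ g), v.
    by apply: gen_inv; apply: gen_base; exists g, v.
  rewrite /wcomm !winv_cat !winvK -!catA.
  rewrite (_ : _ ++ _ = (winv g ++ winv u ++ winv v ++ u ++ g) ++ v ++ winv v ++
                        (winv g ++ v ++ g)); last by rewrite -!catA.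
  rewrite fred_cancelwV.
  rewrite (_ : _ ++ _ = (winv g ++ winv u ++ winv v ++ u) ++ g ++ winv g ++ (v ++ g));
    last by rewrite -!catA.
  by rewrite fred_cancelwV -!catA.
- by apply: (gen_eq (u := [::])); [rewrite /= fred_winvl | apply: gen_one].
- by move=> w _ /gen_inv; rewrite !winv_cat winvK catA.
- move=> u v _ FRu _ FRv.
  apply: (gen_eq (u := (winv g ++ u ++ g) ++ (winv g ++ v ++ g))); last exact: gen_mul.
  rewrite (_ : _ ++ _ = (winv g ++ u) ++ g ++ winv g ++ (v ++ g)); last by rewrite -!catA.
  by rewrite fred_cancelwV -!catA.
- move=> u v H _ /gen_eq; apply.
  by apply: fred_cat_congr => //; apply: fred_cat_congr.
Qed.

Definition wcongr x y := FR (winv x ++ y).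

Lemma wcongr_fred x y : fred x = fred y -> wcongr x y.
Proof.
move=> H; apply: (gen_eq (u := [::])); last exact: gen_one.
by rewrite /= -(fred_winvl x); apply: fred_cat_congr.
Qed.

Lemma wcongr_refl x : wcongr x x.
Proof. exact: wcongr_fred. Qed.

Lemma wcongr_sym x y : wcongr x y -> wcongr y x.
Proof. by move/gen_inv; rewrite /wcongr winv_cat winvK. Qed.

Lemma wcongr_trans x y z : wcongr x y -> wcongr y z -> wcongr x z.
Proof. by move=> Hxy Hyz; apply: gen_eq (gen_mul Hxy Hyz); rewrite -catA fred_cancelwV. Qed.

Lemma wcongr_catl z x y : wcongr x y -> wcongr (z ++ x) (z ++ y).
Proof. by apply: gen_eq; rewrite winv_cat -catA fred_cancelVw. Qed.

Lemma wcongr_catr z x y : wcongr x y -> wcongr (x ++ z) (y ++ z).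
Proof. by move/(commsub_conj z); rewrite /wcongr winv_cat -!catA. Qed.

Lemma wcongr_cat x x' y y' : wcongr x x' -> wcongr y y' -> wcongr (x ++ y) (x' ++ y').
Proof. by move=> Hx Hy; apply: wcongr_trans (wcongr_catr _ Hx) (wcongr_catl _ Hy). Qed.

Lemma wcongr_commute r u : R r -> wcongr (r ++ u) (u ++ r).
Proof. by move=> Rr; rewrite /wcongr winv_cat -!catA; apply: gen_base; exists u, r. Qed.

Lemma wcongr_exp_cat r s m : R s -> wcongr (wexp (r ++ s) m) (wexp r m ++ wexp s m).
Proof.
move=> Rs; elim: m => [|m IH]; first exact: wcongr_refl.
rewrite !wexpS -catA; apply: wcongr_trans (wcongr_catl _ (wcongr_catl _ IH)) _.
rewrite -catA; apply: wcongr_catl; rewrite !catA; apply: wcongr_catr.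
exact: wcongr_commute.
Qed.

(* (xy)^n = x^n y^n W with all three factors in R, and powering is
   multiplicative on R modulo [F,R] *)
Lemma wcongr_exp_mul_cat n e x y :
  wsubgroup R -> (forall u, R (wexp u n)) ->
  FR (wexp (winv (wexp y n) ++ winv (wexp x n) ++ wexp (x ++ y) n) e) ->
  wcongr (wexp (x ++ y) (n * e)) (wexp x (n * e) ++ wexp y (n * e)).
Proof.
move=> [_ RV RM _] Rexp FRWe.
set X' := wexp x n; set Y' := wexp y n; set W := winv Y' ++ winv X' ++ _ in FRWe.
have defXYW : fred (wexp (x ++ y) n) = fred ((X' ++ Y') ++ W).
  by rewrite /W -catA fred_cancelwV (fred_cancelwV [::]).
have RW : R W by apply: RM (RV _ (Rexp _)) (RM _ _ (RV _ (Rexp _)) (Rexp _)).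
rewrite !wexpM; apply: wcongr_trans (wcongr_fred (fred_exp_congr e defXYW)) _.
apply: wcongr_trans (wcongr_exp_cat _ _ RW) _.
rewrite -[_ ++ wexp (wexp y n) e]cats0.
exact: wcongr_cat (wcongr_exp_cat _ _ (Rexp _)) (@wcongr_sym [::] _ FRWe).
Qed.

Lemma commsub_exp_Fder m :
  (forall u, R (wexp u m)) ->
  (forall x y, wcongr (wexp (x ++ y) m) (wexp x m ++ wexp y m)) ->
  forall x, Fder x -> FR (wexp x m).
Proof.
move=> Rexp hom x; elim=> {x}.
- move=> _ [u [v [_ [_ ->]]]].
  have hom_comm : wcongr (wexp (wcomm u v) m) (wcomm (wexp u m) (wexp v m)).
    rewrite /wcomm !winv_exp.
    apply: wcongr_trans (hom _ _) _; apply: wcongr_catl.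
    apply: wcongr_trans (hom _ _) _; apply: wcongr_catl.
    exact: hom.
  have FRcomm : wcongr [::] (wcomm (wexp u m) (wexp v m)).
    by apply: gen_base; exists (wexp u m), (wexp v m).
  exact: wcongr_trans FRcomm (wcongr_sym hom_comm).
- by rewrite wexp_nil; apply: gen_one.
- by move=> w _ /gen_inv; rewrite winv_exp.
- move=> u v _ FRu _ FRv.
  exact: wcongr_trans (@wcongr_cat [::] _ [::] _ FRu FRv) (wcongr_sym (hom u v)).
- by move=> u v H _ /gen_eq; apply; apply: fred_exp_congr.
Qed.

End CongruenceModFR.

Section Evaluation.
Variable gT : finGroupType.
Implicit Types (u v w : word gT).
Local Open Scope group_scope.

Lemma weval_cat u v : weval (u ++ v) = weval u * weval v.
Proof. by elim: u => [|a u IH] /=; rewrite ?mul1g // IH mulgA. Qed.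

Lemma weval_inv u : weval (winv u) = (weval u)^-1.
Proof.
elim: u => [|a u IH]; first by rewrite /= invg1.
rewrite winv_cons weval_cat IH /= mulg1 invMg.
by case: a => [[] y] /=; rewrite ?invgK.
Qed.

Lemma weval_exp u m : weval (wexp u m) = weval u ^+ m.
Proof. by elim: m => // m IH; rewrite wexpS weval_cat IH expgS. Qed.

Lemma weval_wcomm u v : weval (wcomm u v) = [~ weval u, weval v].
Proof. by rewrite /wcomm !weval_cat !weval_inv /commg /conjg !mulgA. Qed.

Lemma weval_fred u : weval (fred u) = weval u.
Proof.
elim: u => // a u /= <-; case: (fred u) => [|b w] //=.
case: ifP => // /wpush_cancel_linv -> /=.
by case: a => [[] x] /=; rewrite mulgA ?mulgV ?mulVg mul1g.
Qed.

Lemma weval_in_wsubgroup (H : {group gT}) : wsubgroup (fun w => weval w \in H).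
Proof.
split=> [|w|u v|u v].
- exact: group1.
- by rewrite weval_inv groupV.
- by rewrite weval_cat; apply: groupM.
- by rewrite -weval_fred => ->; rewrite weval_fred.
Qed.

Lemma Rker_wsubgroup : wsubgroup (@Rker gT).
Proof.
split=> [|w|u v|u v E] //; rewrite /Rker.
- by rewrite weval_inv => ->; rewrite invg1.
- by rewrite weval_cat => -> ->; rewrite mulg1.
- by rewrite -weval_fred E weval_fred.
Qed.

End Evaluation.

Lemma lcs_weval_wsubst (Y : eqType) (gT : finGroupType) (f : Y -> word gT) k w :
  lcs k w -> weval (wsubst f w) \in 'L_k.+1([set: gT])%g.
Proof.
elim: k w => [|k IHk] w /=; first by rewrite lcn1 inE.
apply: (gen_min (wsubgroup_wsubst f (weval_in_wsubgroup _))).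
move=> _ [u [v [Hu [_ ->]]]]; rewrite wsubst_wcomm weval_wcomm /= lcnSn.
by apply: mem_commg; [apply: IHk | rewrite inE].
Qed.

Section RelatorsOfR2nc.
Variables (gT : finGroupType) (n c : nat) (f : bool -> word gT).
Hypothesis exponent_n : forall z : gT, (z ^+ n)%g = 1%g.
Hypothesis class_c : 'L_c.+1([set: gT])%g = 1%g.

Lemma Rker_wsubst_Rrel w : Rrel n c w -> Rker (wsubst f w).
Proof.
have Rker_subst := wsubgroup_wsubst f (Rker_wsubgroup gT).
apply: (gen_min Rker_subst) => {}w [|Lw].
  apply: (gen_min Rker_subst) => _ [u ->].
  by rewrite /Rker wsubst_exp weval_exp exponent_n.
by have := lcs_weval_wsubst f Lw; rewrite class_c => /set1gP.
Qed.

End RelatorsOfR2nc.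

Theorem theorem2 (n c : nat) (e : nat) :
  2 <= n -> 1 <= c -> is_e n c e ->
  forall gT : finGroupType,
    exponent [set: gT] %| n ->
    nilpotent [set: gT] -> nil_class [set: gT] <= c ->
    schur_exp_dvd gT (n * e).
Proof.
move=> _ _ [_ [FRe _]] gT exp_n nil_G class_c x _ Fx.
have exponent_n (z : gT) : (z ^+ n)%g = 1%g by apply: (exponentP exp_n); rewrite inE.
have L_c : 'L_c.+1([set: gT])%g = 1%g by apply/(lcn_nil_classP c nil_G).
have Rker_exp (u : word gT) : Rker (wexp u n).
  by rewrite /Rker weval_exp exponent_n.
apply: (commsub_exp_Fder _ _ Fx) => [u | u v]; first by rewrite mulnC wexpM.
apply: (wcongr_exp_mul_cat (Rker_wsubgroup gT) Rker_exp).
have := commsub_wsubst (Rker_wsubst_Rrel (fun b => if b then v else u) exponent_n L_c) FRe.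
by rewrite wsubst_exp wsubst_wspecial.
Qed.
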